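(* Let $S\subseteq\{0,1\}^\ell$ be a finite set of vectors and let $a,b,c,d\in S$ be such that there is no index $h\in[\ell]$ with $a[h]=b[h]=c[h]=d[h]=1$ (an orthogonal quadruple). Then in the graph $G=\rho(S)$ defined below, $d_G\big((a,b,c)_{ABC},(d,c,b)_{DCB}\big)\ge 7$; in particular $\mathrm{diam}(G)\ge 7$.
   Context: $[\ell]=\{1,\dots,\ell\}$; for $x\in\{0,1\}^\ell$, $x[i]$ is its $i$-th coordinate. A ''double-arc'' (edge) of weight $w$ between $x$ and $y$ means both arcs $x\to y$ and $y\to x$ of weight $w$. Distances $d_G(x,y)$ are shortest directed path lengths; $\mathrm{diam}(G)=\max_{x,y} d_G(x,y)$ over ordered pairs. Construction of $G=\rho(S)$. Vertex set: two special vertices $u,v$ and six disjoint sets (index triples $(i,j,k)\in[\ell]^3$ are ordered and may have repeated entries): - ABC $=\{(a,b,c)_{ABC}: a,b,c\in S\}$; DCB $=\{(d,c,b)_{DCB}: d,c,b\in S\}$. - AB $=\{(a,b,i,j,k)_{AB}: a,b\in S,\ a[i]=a[j]=a[k]=1,$ and $b$ equals 1 on at least two of the positions $i,j,k\}$; DC $=\{(d,c,i,j,k)_{DC}: d,c\in S,\ d[i]=d[j]=d[k]=1,$ and $c$ equals 1 on at least two of the positions $i,j,k\}$. - $AD_Y=\{(a,d,i,j,k)_Y: a,d\in S,\ a[i]=a[j]=a[k]=d[i]=d[j]=d[k]=1\}$; $AD_X=\{(a,d,i,j,k)_X: a,d\in S,$ at most one of $a[i],a[j],a[k],d[i],d[j],d[k]$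 equals $0\}$. Arcs incident to $u,v$ (an arc to/from a set means to/from every vertex of that set): arcs $u\to$ABC of weight 0 and ABC$\to u$ of weight 4; $v\to$DCB of weight 4 and DCB$\to v$ of weight 0; $u\to$AB of weight 0 and AB$\to u$ of weight 3; DC$\to v$ of weight 0 and $v\to$DC of weight 3; double-arcs $u$–$v$ of weight 2, $u$–$AD_X$ and $v$–$AD_X$ of weight 1, $u$–$AD_Y$ and $v$–$AD_Y$ of weight 2, AB–$v$ of weight 2, DC–$u$ of weight 2. All other arcs are double-arcs of weight 1, present exactly in the following cases (only when both endpoints exist): - $(a,b,c)_{ABC}$–$(a,b,i,j,k)_{AB}$ if some $h\in\{i,j,k\}$ has $b[h]=c[h]=1$; - $(d,c,b)_{DCB}$–$(d,c,i,j,k)_{DC}$ if some $h\in\{i,j,k\}$ has $c[h]=b[h]=1$; - $(a,b,i,j,k)_{AB}$–$(a,b,i',j',k')_{AB}$ and $(d,c,i,j,k)_{DC}$–$(d,c,i',j',k')_{DC}$ for all index triples; - $(a,b,i,j,k)_{AB}$–$(a,d,i,j,k)_Y$ and $(a,d,i,j,k)_Y$–$(d,c,i,j,k)_{DC}$; - $(a,d,i,j,k)_X$–$(a,d',i,j,k)_Y$ for $d\neq d'$, and $(a,d,i,j,k)_X$–$(a',d,i,j,k)_Y$ for $a\neq a'$; - $(a,d,i,j,k)_X$–$(a,d,i',j',k')_Y$ for all index triples. No other arcs exist. *)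

From mathcomp Require Import all_boot.
Set Implicit Arguments. Unset Strict Implicit. Unset Printing Implicit Defensive.

Section Rho.
Variable l : nat.

(* vectors of {0,1}^l, coordinates indexed by 'I_l (0-based version of [l]) *)
Definition vec := {ffun 'I_l -> bool}.
(* ordered index triples (i,j,k), repetitions allowed *)
Definition idx3 := ('I_l * 'I_l * 'I_l)%type.

Definition tI (t : idx3) : 'I_l := t.1.1.
Definition tJ (t : idx3) : 'I_l := t.1.2.
Definition tK (t : idx3) : 'I_l := t.2.
Definition tlist (t : idx3) : seq 'I_l := [:: tI t; tJ t; tK t].

Inductive vtx : Type :=
| U | V
| ABC of vec & vec & vec
| DCB of vec & vec & vec
| AB  of vec & vec & idx3
| DC  of vec & vec & idx3
| ADY of vec & vec & idx3
| ADX of vec & vec & idx3.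

Definition all3 (x : vec) (t : idx3) : bool := all (fun h => x h) (tlist t).
Definition two3 (y : vec) (t : idx3) : bool := 2 <= count (fun h => y h) (tlist t).
Definition xcond (a d : vec) (t : idx3) : bool :=
  count negb (map (fun h => a h) (tlist t) ++ map (fun h => d h) (tlist t)) <= 1.
Definition common (x y : vec) (t : idx3) : bool := has (fun h => x h && y h) (tlist t).

Definition inV (S : {set vec}) (x : vtx) : bool :=
  match x with
  | U | V => true
  | ABC a b c => [&& a \in S, b \in S & c \in S]
  | DCB d c b => [&& d \in S, c \in S & b \in S]
  | AB a b t => [&& a \in S, b \in S, all3 a t & two3 b t]
  | DC d c t => [&& d \in S, c \in S, all3 d t & two3 c t]
  | ADY a d t => [&& a \in S, d \in S, all3 a t & all3 d t]
  | ADX a d t => [&& a \in S, d \in S & xcond a d t]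
  end.

(* one-directional arcs and one orientation of each double-arc, with weights;
   existence of endpoints is imposed separately in [arc] *)
Inductive darc : vtx -> vtx -> nat -> Prop :=
| d_u_abc a b c : darc U (ABC a b c) 0
| d_abc_u a b c : darc (ABC a b c) U 4
| d_v_dcb d c b : darc V (DCB d c b) 4
| d_dcb_v d c b : darc (DCB d c b) V 0
| d_u_ab a b t : darc U (AB a b t) 0
| d_ab_u a b t : darc (AB a b t) U 3
| d_dc_v d c t : darc (DC d c t) V 0
| d_v_dc d c t : darc V (DC d c t) 3.

Inductive sedge : vtx -> vtx -> nat -> Prop :=
| e_uv : sedge U V 2
| e_ux a d t : sedge U (ADX a d t) 1
| e_vx a d t : sedge V (ADX a d t) 1
| e_uy a d t : sedge U (ADY a d t) 2
| e_vy a d t : sedge V (ADY a d t) 2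
| e_abv a b t : sedge (AB a b t) V 2
| e_dcu d c t : sedge (DC d c t) U 2
| e_abc_ab a b c t : common b c t -> sedge (ABC a b c) (AB a b t) 1
| e_dcb_dc d c b t : common c b t -> sedge (DCB d c b) (DC d c t) 1
| e_ab_ab a b t t' : sedge (AB a b t) (AB a b t') 1
| e_dc_dc d c t t' : sedge (DC d c t) (DC d c t') 1
| e_ab_y a b d t : sedge (AB a b t) (ADY a d t) 1
| e_y_dc a d c t : sedge (ADY a d t) (DC d c t) 1
| e_x_y1 a d d' t : d != d' -> sedge (ADX a d t) (ADY a d' t) 1
| e_x_y2 a a' d t : a != a' -> sedge (ADX a d t) (ADY a' d t) 1
| e_x_y3 a d t t' : sedge (ADX a d t) (ADY a d t') 1.

Definition arc (S : {set vec}) (x y : vtx) (w : nat) : Prop :=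
  inV S x /\ inV S y /\ (darc x y w \/ sedge x y w \/ sedge y x w).

Inductive walk (S : {set vec}) : vtx -> vtx -> nat -> Prop :=
| walk_nil x : inV S x -> walk S x x 0
| walk_cons x y z w n : arc S x y w -> walk S y z n -> walk S x z (w + n).

(* d_G(x,y) >= k  (shortest directed path length; +infinity if unreachable) *)
Definition dist_ge (S : {set vec}) (x y : vtx) (k : nat) : Prop :=
  forall n, walk S x y n -> k <= n.

Definition diam_ge (S : {set vec}) (k : nat) : Prop :=
  exists x y, inV S x /\ inV S y /\ dist_ge S x y k.

Definition orth4 (a b c d : vec) : Prop :=
  forall h : 'I_l, ~~ [&& a h, b h, c h & d h].

End Rho.

From Pilot Require Import Defs.
From mathcomp Require Import all_boot.
Set Implicit Arguments. Unset Strict Implicit. Unset Printing Implicit Defensive.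

(* A lower bound on a directed distance is certified by a
   potential: a function [f] on the vertices with [f y <= f x + w] for every
   arc [x -> y] of weight [w].  Summing along a walk gives
   [f z <= f x + n] for every walk [x ~> z] of weight [n], hence
   [d_G(x, z) >= f z - f x].

   For s = (a,b,c)_ABC and t = (d,c,b)_DCB we write down an explicit
   potential [pot] with [pot s = 0] and [pot t = 7]: it is the (exact, or
   slightly under-estimated) distance from s, given by cases on how much of
   the data (a,b,c,d) a vertex shares with s and t.  Checking the arc
   inequality is a finite case analysis over the arc kinds of rho(S); the
   only cases where the naive estimate would fail are arcs through a vertex
   (a,d,t)_Y or (a,d,t)_X whose index triple [t] would give a shortcut, and
   these are excluded by the orthogonality of (a,b,c,d): no position is 1 in
   all four vectors. *)

Section Potential.
Variables (l : nat) (S : {set vec l}) (f : vtx l -> nat).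
Hypothesis f_arc : forall x y w, Defs.arc S x y w -> f y <= f x + w.

Lemma potential_walk x z n : walk S x z n -> f z <= f x + n.
Proof.
elim=> [y _ | x' y z' w m Hxy _ IH]; first by rewrite addn0.
by apply: (leq_trans IH); rewrite addnA leq_add2r; apply: f_arc.
Qed.

Lemma potential_dist_ge x z k : f x + k <= f z -> dist_ge S x z k.
Proof.
move=> Hk n /potential_walk Hn.
by rewrite -(leq_add2l (f x)) (leq_trans Hk Hn).
Qed.

End Potential.

Section Orthogonal.
Variables (l : nat) (a b c d : vec l).

Lemma two3_common (t : idx3 l) : two3 b t -> two3 c t -> common b c t.
Proof.
rewrite /two3 /common /=.
by case: (b (tI t)); case: (b (tJ t)); case: (b (tK t));
   case: (c (tI t)); case: (c (tJ t)); case: (c (tK t)).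
Qed.

Lemma common_sym (t : idx3 l) : common b c t = common c b t.
Proof. by rewrite /common /= (andbC (b _)) (andbC (b (tJ t))) (andbC (b (tK t))). Qed.

Hypothesis orth : orth4 a b c d.

(* This is
   what rules out the shortcuts through the Y and X vertices. *)
Lemma orth4_no_common (t : idx3 l) :
  all3 a t -> all3 d t -> common b c t -> False.
Proof.
move=> /allP Ha /allP Hd /hasP [h Hh /andP [Hb Hc]].
by move: (orth h); rewrite Ha // Hb Hc Hd.
Qed.

Lemma orth4_no_common' (t : idx3 l) :
  all3 a t -> all3 d t -> common c b t -> False.
Proof. by rewrite -common_sym; apply: orth4_no_common. Qed.

Lemma orth4_no_two3 (t : idx3 l) :
  all3 a t -> all3 d t -> two3 b t -> two3 c t -> False.
Proof. by move=> Ha Hd Hb Hc; apply: orth4_no_common (two3_common Hb Hc). Qed.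

End Orthogonal.

Definition ab_vertex l (a b : vec l) (t : idx3 l) : bool := all3 a t && two3 b t.
Definition ab_near l (a b c : vec l) (t : idx3 l) : bool :=
  ab_vertex a b t && common b c t.
Definition dc_near l (d c b : vec l) (t : idx3 l) : bool :=
  [&& all3 d t, two3 c t & common c b t].

(* A lower estimate of the distance from (a,b,c)_ABC to each vertex. *)
Definition pot l (a b c d : vec l) (v : vtx l) : nat :=
  match v with
  | U => 4
  | V => 3
  | ABC x y z => if (x == a) && (y == b) then (if z == c then 0 else 2) else 4
  | AB x y t =>
      if x == a then (if y == b then (if common b c t then 1 else 2) else 3) else 4
  | ADY x z t =>
      if x == a then (if ab_near a b c t then 2 else if ab_vertex a b t then 3 else 4)
      else if (z != d) || ab_near a b c t then 4 else 5
  | ADX x z t =>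
      if ((x == a) && (z != d)) || (ab_near a b c t && ((x == a) || all3 z t))
      then 3 else 4
  | DC x y t =>
      if x != d then 3 else if y != c then 4 else if dc_near d c b t then 6 else 5
  | DCB x y z => if x != d then 3 else if y != c then 4 else if z != b then 5 else 7
  end.

Ltac split_atoms :=
  repeat match goal with
  | H : is_true (_ && _) |- _ => case/andP: H => ? ?
  | H : is_true [&& _ , _ & _] |- _ => case/and3P: H => ? ? ?
  | H : is_true [&& _ , _ , _ & _] |- _ => case/and4P: H => ? ? ? ?
  end;
  repeat match goal with
  | H : is_true ?A |- context [?A] => rewrite H
  | H : ?A = false |- context [?A] => rewrite H
  | |- context [?x == ?x] => rewrite eqxx
  | |- context [?x == ?y] => case: eqP => ?; subst
  | |- context [all3 ?x ?t] => case: (boolP (all3 x t)) => ?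
  | |- context [two3 ?x ?t] => case: (boolP (two3 x t)) => ?
  | |- context [common ?x ?y ?t] => case: (boolP (common x y t)) => ?
  end.

Ltac close_case :=
  solve [ done
        | exfalso; congruence
        | exfalso; match goal with
          | Ho : orth4 _ _ _ _, H : is_true (common _ _ ?t) |- _ =>
              solve [ apply: (orth4_no_common (t := t) Ho) => //
                    | apply: (orth4_no_common' (t := t) Ho) => // ]
          | Ho : orth4 _ _ _ _, H : is_true (two3 _ ?t) |- _ =>
              apply: (orth4_no_two3 (t := t) Ho) => // end ].

Lemma pot_arc l (S : {set vec l}) (a b c d : vec l) (Ho : orth4 a b c d)
    (x y : vtx l) (w : nat) :
  Defs.arc S x y w -> pot a b c d y <= pot a b c d x + w.
Proof.
move=> [Hx [Hy [H | [H | H]]]]; move: Hx Hy; case: H => /= *;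
  rewrite /ab_near /ab_vertex /dc_near; split_atoms;
  rewrite ?orbT ?orbF ?andbT ?andbF /=; try close_case.
Qed.

Theorem mainTheorem3 (l : nat) (S : {set vec l}) (a b c d : vec l) :
  a \in S -> b \in S -> c \in S -> d \in S -> orth4 a b c d ->
  dist_ge S (ABC a b c) (DCB d c b) 7 /\ diam_ge S 7.
Proof.
move=> Ha Hb Hc Hd Ho.
have Hdist : dist_ge S (ABC a b c) (DCB d c b) 7.
  by apply: (potential_dist_ge (pot_arc (S := S) Ho)); rewrite /= !eqxx.
split=> //; exists (ABC a b c), (DCB d c b).
by rewrite /= Ha Hb Hc Hd.
Qed.
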